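(* Fix a Polish sample space $\Omega$ and let $F,R$ be partially ordered topological spaces that are Souslin spaces with Borel order relations. The constant injection $$\mathrm{const}:F\times R\to\mathrm{DP}_\Omega(F,R),\quad (x_F,x_R)\mapsto {\downarrow}x_F\times{\uparrow}x_R=\{(y_F,y_R): y_F\preceq x_F,\ x_R\preceq y_R\}$$ is quasi-measurable.
   Context: A Souslin space is a Hausdorff space that is a continuous image of a Polish space; analytic sets are continuous images of Polish spaces. Quasi-universal spaces: a set $A$ with a set of maps $\Omega\to A$ (random variables) containing constants and closed under precomposition with Borel measurable maps $\Omega\to\Omega$; a map $f:A\to B$ is quasi-measurable if $f\circ\alpha$ is a random variable of $B$ for every random variable $\alpha$ of $A$. Conventions: the random variables of $F$ and $R$ are the Borel measurable maps from $\Omega$; those of $F\times R$ are pairs of such maps. $\mathrm{DP}_\Omega(F,R)$ is the set of upper sets of $F^{\mathrm{op}}\times R$ ($F$ with reversed order, componentwise order) of the form $\uparrow A$ with $A\subseteq F^{\mathrm{op}}\times R$ analytic, whose random variables are the maps $\alpha:\Omega\to\mathrm{DP}_\Omega(F,R)$ with analytic feasible set $\{(\omega,x_F,x_R):(x_F,x_R)\in\alpha(\omega)\}\subseteq\Omega\times F\times R$. *)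

From HB Require Import structures.
From mathcomp Require Import all_boot all_order all_algebra.
From mathcomp Require Import all_classical all_reals.
From mathcomp Require Import topology measurable_structure.
From mathcomp Require Import Rstruct.

Set Implicit Arguments.
Unset Strict Implicit.
Unset Printing Implicit Defensive.

Import Order.TTheory GRing.Theory Num.Theory.
Local Open Scope classical_set_scope.
Local Open Scope ring_scope.

Notation Real := Rdefinitions.R.

Definition is_metric (T : Type) (d : T -> T -> Real) : Prop :=
  [/\ forall x y, 0 <= d x y,
      forall x y, d x y = 0 <-> x = y,
      forall x y, d x y = d y x &
      forall x y z, d x z <= d x y + d y z].

Definition metric_induces (T : topologicalType) (d : T -> T -> Real) : Prop :=
  forall A : set T, open A <->
    (forall x, A x -> exists2 e : Real, 0 < e & [set y | d x y < e] `<=` A).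

Definition metric_complete (T : topologicalType) (d : T -> T -> Real) : Prop :=
  forall u : nat -> T,
    (forall e : Real, 0 < e -> exists N : nat, forall m n : nat,
        (N <= m)%N -> (N <= n)%N -> d (u m) (u n) < e) ->
    exists l : T, u @ \oo --> l.

Definition separable_space (T : topologicalType) : Prop :=
  exists D : set T, countable D /\ dense D.

Definition completely_metrizable (T : topologicalType) : Prop :=
  exists d : T -> T -> Real,
    [/\ is_metric d, metric_induces d & metric_complete d].

Definition polish (T : topologicalType) : Prop :=
  separable_space T /\ completely_metrizable T.

(* The empty space is
   Polish, so set0 is analytic; we state that case separately since we quantify
   over (possibly nonempty-only usable) topological types. *)
Definition analytic (T : topologicalType) (A : set T) : Prop :=
  A = set0 \/
  exists (P : topologicalType) (f : P -> T),
    [/\ polish P, continuous f & f @` setT = A].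

Definition souslin (T : topologicalType) : Prop :=
  hausdorff_space T /\ analytic (@setT T).

Definition borel (T : topologicalType) (A : set T) : Prop :=
  <<s (@open T) >> A.

Definition borel_measurable (T U : topologicalType) (f : T -> U) : Prop :=
  forall B : set U, borel B -> borel (f @^-1` B).

Definition partial_order (T : Type) (le : T -> T -> Prop) : Prop :=
  [/\ forall x, le x x,
      forall x y, le x y -> le y x -> x = y &
      forall x y z, le x y -> le y z -> le x z].

Definition borel_order (T : topologicalType) (le : T -> T -> Prop) : Prop :=
  borel [set p : T * T | le p.1 p.2].

Section DP.
Variables (Omega F R : topologicalType).
Variables (leF : F -> F -> Prop) (leR : R -> R -> Prop).

(* order of F^op x R:  a <= y  iff  y.1 <=_F a.1 and a.2 <=_R y.2 *)
Definition le_opprod (a y : F * R) : Prop := leF y.1 a.1 /\ leR a.2 y.2.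

Definition upclosure (A : set (F * R)) : set (F * R) :=
  [set y | exists2 a, A a & le_opprod a y].

(* elements of DP_Omega(F,R): sets of the form  up A  with A analytic
   (F^op x R has the same topology as F x R) *)
Definition in_DP (D : set (F * R)) : Prop :=
  exists A : set (F * R), analytic A /\ D = upclosure A.

Definition feasible (alpha : Omega -> set (F * R)) : set (Omega * F * R) :=
  [set p | alpha p.1.1 (p.1.2, p.2)].

Definition rv_DP (alpha : Omega -> set (F * R)) : Prop :=
  (forall w, in_DP (alpha w)) /\ analytic (feasible alpha).

Definition rv_FR (alpha : Omega -> F * R) : Prop :=
  borel_measurable (fun w => (alpha w).1) /\
  borel_measurable (fun w => (alpha w).2).

Definition quasi_measurable_to_DP (f : F * R -> set (F * R)) : Prop :=
  forall alpha : Omega -> F * R, rv_FR alpha -> rv_DP (f \o alpha).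

Definition const_DP (x : F * R) : set (F * R) :=
  [set y | leF y.1 x.1 /\ leR x.2 y.2].

End DP.

From HB Require Import structures.
From mathcomp Require Import all_boot all_order all_algebra all_classical all_reals.
From mathcomp Require Import topology measurable_structure Rstruct lra.
Import Order.TTheory GRing.Theory Num.Theory.
Local Open Scope classical_set_scope.
Local Open Scope ring_scope.

(* Omega, F and R are continuous images of Polish spaces PO, PF and PR.  The
   feasible set of [const \o alpha], made of the (w, y1, y2) with
   y1 <= alpha1 w and alpha2 w <= y2, is then the continuous image of the set Z
   of the (w, u, u', v, v') in PO x PF^2 x PR^2 with alpha1 w = u', u <= u',
   alpha2 w = v' and v' <= v (all read through the covering maps).  The order
   conditions are preimages of Borel sets under continuous maps, and the
   equations are Borel because a Hausdorff continuous image of a separable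
   metric space is separated by countably many pairs of disjoint open sets.  So
   Z is Borel, hence analytic: closed subsets of Polish spaces are analytic and
   analytic sets are stable under countable unions and intersections. *)

Lemma choice_dep {I : Type} {T : I -> Type} {Q : forall i, T i -> Prop} :
  (forall i, exists x, Q i x) -> exists f : forall i, T i, forall i, Q i (f i).
Proof. by move=> QT; exists (fun i => sval (cid (QT i))) => i; exact: svalP. Qed.

Definition inv_succ (n : nat) : Real := n.+1%:R^-1.

Lemma inv_succ_gt0 n : 0 < inv_succ n.
Proof. by rewrite invr_gt0 ltr0Sn. Qed.

Lemma inv_succ_le1 n : inv_succ n <= 1.
Proof. by rewrite invf_le1 ?ltr0Sn // ler1n. Qed.

Lemma inv_succ_le {m n : nat} : (m <= n)%N -> inv_succ n <= inv_succ m.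
Proof. by move=> mn; rewrite lef_pV2 ?posrE ?ltr0Sn // ler_nat. Qed.

Lemma inv_succ_lt {e : Real} : 0 < e -> exists n, inv_succ n < e.
Proof.
move=> e0; exists (Num.trunc e^-1); have := truncnS_gt e^-1.
by rewrite /inv_succ invf_plt ?posrE // ltr0Sn.
Qed.

Lemma min1_triangle (a b c : Real) : 0 <= b -> 0 <= c -> a <= b + c ->
  Num.min 1 a <= Num.min 1 b + Num.min 1 c.
Proof.
move=> b0 c0 abc.
have a1 : Num.min 1 a <= 1 by rewrite ge_min lexx.
have aa : Num.min 1 a <= a by rewrite ge_min lexx orbT.
have b'0 : 0 <= Num.min 1 b by rewrite le_min ler01 b0.
have c'0 : 0 <= Num.min 1 c by rewrite le_min ler01 c0.
case: (leP 1 b) => b1; first lra.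
case: (leP 1 c) => c1; lra.
Qed.

(** * Polish metric spaces *)

Definition dcauchy {T} (d : T -> T -> Real) (u : nat -> T) :=
  forall e : Real, 0 < e ->
    exists N, forall m n, (N <= m)%N -> (N <= n)%N -> d (u m) (u n) < e.

Definition dconverges {T} (d : T -> T -> Real) (u : nat -> T) (l : T) :=
  forall e : Real, 0 < e -> exists N, forall n, (N <= n)%N -> d (u n) l < e.

Record polishMetric := PolishMetric {
  pm_sort :> Type;
  dist : pm_sort -> pm_sort -> Real;
  dist_is_metric : is_metric dist;
  pm_point : pm_sort;
  dist_complete : forall u, dcauchy dist u -> exists l, dconverges dist u l;
  dist_separable : exists s : nat -> pm_sort,
    forall x (e : Real), 0 < e -> exists k, dist x (s k) < e }.
Arguments PolishMetric {pm_sort dist}.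
Arguments dist {p}.
Arguments dist_complete {p u}.

Section MetricBasics.
Context {P : polishMetric}.
Implicit Types x y z : P.

Lemma dist_ge0 x y : 0 <= dist x y. Proof. by case: (dist_is_metric P). Qed.
Lemma dist_eq0 x y : dist x y = 0 <-> x = y. Proof. by case: (dist_is_metric P). Qed.
Lemma distxx x : dist x x = 0. Proof. exact/dist_eq0. Qed.
Lemma distC x y : dist x y = dist y x. Proof. by case: (dist_is_metric P). Qed.
Lemma dist_triangle y x z : dist x z <= dist x y + dist y z.
Proof. by case: (dist_is_metric P). Qed.

End MetricBasics.

Definition dopen {P : polishMetric} (A : set P) :=
  forall x, A x -> exists2 e : Real, 0 < e & forall y, dist x y < e -> A y.

Definition dclosed {P : polishMetric} (A : set P) := dopen (~` A).

Definition dcontinuous {P Q : polishMetric} (f : P -> Q) :=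
  forall x (e : Real), 0 < e ->
    exists2 d : Real, 0 < d & forall y, dist x y < d -> dist (f x) (f y) < e.

Lemma dcontinuous_id (P : polishMetric) : dcontinuous (@id P).
Proof. by move=> x e e0; exists e. Qed.

Lemma dcontinuous_comp {P Q S : polishMetric} {f : P -> Q} {g : Q -> S} :
  dcontinuous f -> dcontinuous g -> dcontinuous (g \o f).
Proof.
move=> fc gc x e e0; have [d d0 gd] := gc (f x) e e0.
by have [d' d'0 fd'] := fc x d d0; exists d' => // y /fd' /gd.
Qed.

Lemma dclosed_preimage {P Q : polishMetric} {f : P -> Q} {C : set Q} :
  dcontinuous f -> dclosed C -> dclosed (f @^-1` C).
Proof.
move=> fc Cc x /Cc [e e0 eC]; have [d d0 fd] := fc x e e0.
by exists d => // y /fd /eC.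
Qed.

Lemma dclosed_eq (P Q : polishMetric) (f g : P -> Q) :
  dcontinuous f -> dcontinuous g -> dclosed [set x | f x = g x].
Proof.
move=> fc gc x /= fgx; have r0 : 0 < dist (f x) (g x) / 2.
  by rewrite divr_gt0 // lt_def dist_ge0 andbT; apply/eqP => /dist_eq0.
have [d1 d10 fd1] := fc x _ r0; have [d2 d20 gd2] := gc x _ r0.
exists (Num.min d1 d2); first by rewrite lt_min d10 d20.
move=> y; rewrite lt_min => /andP[/fd1 fy /gd2 gy] fgy; rewrite -fgy in gy.
by have := dist_triangle (f y) (f x) (g x); rewrite (distC (f y)); lra.
Qed.

Lemma dclosedI (P : polishMetric) (A B : set P) :
  dclosed A -> dclosed B -> dclosed (A `&` B).
Proof.
move=> Ac Bc x /not_andP [/Ac [e e0 eA]|/Bc [e e0 eB]]; exists e => // y.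
  by move=> /eA + [].
by move=> /eB + [].
Qed.

Lemma dclosed_bigcap (P : polishMetric) (C : nat -> set P) :
  (forall n, dclosed (C n)) -> dclosed (\bigcap_n C n).
Proof.
move=> Cc x /= /existsNP [n /not_implyP [_ /Cc [e e0 eC]]].
by exists e => // y /eC + /(_ n I).
Qed.

Lemma dclosed0 (P : polishMetric) : dclosed (@set0 P).
Proof. by move=> x _; exists 1 => // y _ []. Qed.

Lemma dclosedT (P : polishMetric) : dclosed (@setT P).
Proof. by move=> x /(_ I). Qed.

Definition dist_nat (m n : nat) : Real := if m == n then 0 else 1.

Lemma dist_nat_metric : is_metric dist_nat.
Proof.
rewrite /dist_nat; split.
- by move=> m n; case: eqP.
- move=> m n; case: eqP => [-> //|mn]; split => [|/mn //].
  by move/eqP; rewrite oner_eq0.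
- by move=> m n; rewrite eq_sym.
- by move=> m n k; case: eqP => [->|]; case: eqP => [->|]; case: eqP => //; lra.
Qed.

Lemma dist_nat_complete u : dcauchy dist_nat u -> exists l, dconverges dist_nat u l.
Proof.
move=> /(_ 1 ltr01) [N uN]; exists (u N) => e e0; exists N => n Nn.
by have := uN n N Nn (leqnn N); rewrite /dist_nat; case: eqP => //; lra.
Qed.

Lemma dist_nat_separable :
  exists s : nat -> nat, forall m (e : Real), 0 < e -> exists k, dist_nat m (s k) < e.
Proof. by exists id => m e e0; exists m; rewrite /dist_nat eqxx. Qed.

Definition natPM : polishMetric :=
  PolishMetric dist_nat_metric 0%N dist_nat_complete dist_nat_separable.

Lemma natPM_dist_lt1 (m n : natPM) : dist m n < 1 -> m = n.
Proof. by rewrite /= /dist_nat; case: eqP => // _; rewrite ltxx. Qed.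

Section Product.
Variables P Q : polishMetric.

Definition dist_prod (a b : P * Q) : Real := dist a.1 b.1 + dist a.2 b.2.

Lemma dist_prod_metric : is_metric dist_prod.
Proof.
rewrite /dist_prod; split.
- by move=> a b; rewrite addr_ge0 ?dist_ge0.
- move=> [x1 x2] [y1 y2] /=; split; last by case=> -> ->; rewrite !distxx addr0.
  have := dist_ge0 x1 y1; have := dist_ge0 x2 y2 => h2 h1 h.
  have /dist_eq0 -> : dist x1 y1 = 0 by lra.
  by have /dist_eq0 -> : dist x2 y2 = 0 by lra.
- by move=> a b; rewrite distC [dist a.2 _]distC.
- by move=> a b c; have := dist_triangle b.1 a.1 c.1; have := dist_triangle b.2 a.2 c.2; lra.
Qed.

Lemma dist_prod_complete u : dcauchy dist_prod u -> exists l, dconverges dist_prod u l.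
Proof.
move=> uc.
have [l1 ul1] : exists l1, dconverges dist (fun n => (u n).1) l1.
  apply: dist_complete => e /uc [N uN]; exists N => m n Nm Nn.
  by have := uN m n Nm Nn; rewrite /dist_prod; have := dist_ge0 (u m).2 (u n).2; lra.
have [l2 ul2] : exists l2, dconverges dist (fun n => (u n).2) l2.
  apply: dist_complete => e /uc [N uN]; exists N => m n Nm Nn.
  by have := uN m n Nm Nn; rewrite /dist_prod; have := dist_ge0 (u m).1 (u n).1; lra.
exists (l1, l2) => e e0; have e20 : 0 < e / 2 by lra.
have [N1 uN1] := ul1 _ e20; have [N2 uN2] := ul2 _ e20.
exists (maxn N1 N2) => n; rewrite geq_max => /andP[/uN1 + /uN2]; rewrite /dist_prod /=; lra.
Qed.

Lemma dist_prod_separable : exists s : nat -> P * Q,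
  forall x (e : Real), 0 < e -> exists k, dist_prod x (s k) < e.
Proof.
have [s1 s1d] := dist_separable P; have [s2 s2d] := dist_separable Q.
exists (fun k => let: (k1, k2) := odflt (0, 0)%N (unpickle k) in (s1 k1, s2 k2)).
move=> [x1 x2] e e0; have e20 : 0 < e / 2 by lra.
have [k1 xk1] := s1d x1 _ e20; have [k2 xk2] := s2d x2 _ e20.
by exists (pickle (k1, k2)); rewrite pickleK /dist_prod /=; lra.
Qed.

Definition prodPM : polishMetric :=
  PolishMetric dist_prod_metric (pm_point P, pm_point Q)
    dist_prod_complete dist_prod_separable.

Lemma dist_fst_le (a b : prodPM) : dist a.1 b.1 <= dist a b.
Proof. by rewrite /= /dist_prod lerDl dist_ge0. Qed.

Lemma dist_snd_le (a b : prodPM) : dist a.2 b.2 <= dist a b.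
Proof. by rewrite /= /dist_prod lerDr dist_ge0. Qed.

End Product.
Arguments dist_fst_le {P Q}.
Arguments dist_snd_le {P Q}.

Lemma dcontinuous_fst {P Q : polishMetric} : dcontinuous (fst : prodPM P Q -> P).
Proof. by move=> x e e0; exists e => // y; apply: le_lt_trans (dist_fst_le x y). Qed.

Lemma dcontinuous_snd {P Q : polishMetric} : dcontinuous (snd : prodPM P Q -> Q).
Proof. by move=> x e e0; exists e => // y; apply: le_lt_trans (dist_snd_le x y). Qed.

Section CountableProduct.
Variable P : nat -> polishMetric.

Definition pi_term (p q : forall n, P n) n : Real :=
  Num.min 1 (dist (p n) (q n)) * inv_succ n.

Definition dist_pi (p q : forall n, P n) : Real := sup (range (pi_term p q)).

Lemma pi_term_ge0 p q n : 0 <= pi_term p q n.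
Proof. by rewrite mulr_ge0 ?le_min ?ler01 ?dist_ge0 // ltW // inv_succ_gt0. Qed.

Lemma pi_term_le_inv_succ p q n : pi_term p q n <= inv_succ n.
Proof. by rewrite ler_piMl ?ge_min ?lexx // ltW // inv_succ_gt0. Qed.

Lemma pi_term_le_dist p q n : pi_term p q n <= dist (p n) (q n).
Proof.
have m0 : 0 <= Num.min 1 (dist (p n) (q n)) by rewrite le_min ler01 dist_ge0.
apply: le_trans (_ : _ <= Num.min 1 (dist (p n) (q n))) _.
  by rewrite ler_piMr ?inv_succ_le1.
by rewrite ge_min lexx orbT.
Qed.

Lemma pi_term_le_dist_pi p q n : pi_term p q n <= dist_pi p q.
Proof.
apply: ub_le_sup; last by exists n.
exists 1 => _ [m _ <-]; exact: le_trans (pi_term_le_inv_succ p q m) (inv_succ_le1 m).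
Qed.

Lemma dist_pi_le p q (c : Real) : (forall n, pi_term p q n <= c) -> dist_pi p q <= c.
Proof. by move=> pqc; apply: ge_sup; [exists (pi_term p q 0); exists 0%N | move=> _ [n _ <-]]. Qed.

Lemma dist_pi_coord_lt p q n (e : Real) : 0 < e ->
  dist_pi p q < Num.min e 1 * inv_succ n -> dist (p n) (q n) < e.
Proof.
move=> e0 /(le_lt_trans (pi_term_le_dist_pi p q n)).
rewrite /pi_term ltr_pM2r ?inv_succ_gt0 // => lt_min_e.
have ee : Num.min e 1 <= e by rewrite ge_min lexx.
have e1 : Num.min e 1 <= 1 by rewrite ge_min lexx orbT.
rewrite ltNge; apply/negP => ed.
by move: lt_min_e; rewrite ltNge le_min e1 (le_trans ee ed).
Qed.

Lemma dist_pi_le_prefix {p q : forall n, P n} {N : nat} {e : Real} : inv_succ N < e ->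
  (forall n, (n < N)%N -> dist (p n) (q n) < e) -> dist_pi p q <= e.
Proof.
move=> Ne pqe; apply: dist_pi_le => n; apply: ltW; case: (ltnP n N) => [nN|Nn].
  exact: le_lt_trans (pi_term_le_dist p q n) (pqe n nN).
exact: le_lt_trans (pi_term_le_inv_succ p q n) (le_lt_trans (inv_succ_le Nn) Ne).
Qed.

Lemma coord_weight_gt0 {e : Real} n : 0 < e -> 0 < Num.min e 1 * inv_succ n.
Proof. by move=> e0; rewrite mulr_gt0 ?inv_succ_gt0 // lt_min e0 ltr01. Qed.

Lemma dist_pi_metric : is_metric dist_pi.
Proof.
split.
- by move=> p q; apply: le_trans (pi_term_le_dist_pi p q 0); exact: pi_term_ge0.
- move=> p q; split => [pq0|<-]; last first.
    apply/eqP; rewrite eq_le (le_trans (pi_term_ge0 p p 0) (pi_term_le_dist_pi _ _ _)) andbT.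
    by apply: dist_pi_le => n; rewrite /pi_term distxx (min_idPr ler01) mul0r.
  apply: functional_extensionality_dep => n; apply/dist_eq0/eqP.
  rewrite eq_le dist_ge0 andbT leNgt; apply/negP => d0.
  have : 0 < pi_term p q n by rewrite mulr_gt0 ?inv_succ_gt0 // lt_min ltr01 d0.
  by have := pi_term_le_dist_pi p q n; rewrite pq0; lra.
- move=> p q; rewrite /dist_pi; congr sup; apply/seteqP; split => _ [n _ <-];
    by exists n => //; rewrite /pi_term distC.
- move=> p q r; apply: dist_pi_le => n.
  apply: le_trans (lerD (pi_term_le_dist_pi p q n) (pi_term_le_dist_pi q r n)).
  rewrite /pi_term -mulrDl ler_wpM2r ?(ltW (inv_succ_gt0 n)) // min1_triangle ?dist_ge0 //.
  exact: dist_triangle.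
Qed.

Lemma dist_pi_complete u : dcauchy dist_pi u -> exists l, dconverges dist_pi u l.
Proof.
move=> uc.
have ulim n : exists l, dconverges dist (fun m => u m n) l.
  apply: dist_complete => e e0; have [N uN] := uc _ (coord_weight_gt0 n e0).
  by exists N => m k Nm Nk; exact: dist_pi_coord_lt (uN m k Nm Nk).
have [l ul] := choice_dep ulim.
exists l => e e0; have e20 : 0 < e / 2 by lra.
have [N Ne] := inv_succ_lt e20.
have [M uM] := boolp.choice (fun n => ul n _ e20).
exists (\max_(i < N) M i) => m Mm.
apply: le_lt_trans (dist_pi_le_prefix Ne _) _; last by lra.
move=> n nN; apply: uM; apply: leq_trans Mm.
exact: (@leq_bigmax _ (fun i : 'I_N => M (nat_of_ord i)) (Ordinal nN)).
Qed.

Lemma dist_pi_separable : exists s : nat -> forall n, P n,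
  forall x (e : Real), 0 < e -> exists k, dist_pi x (s k) < e.
Proof.
have [t td] := choice_dep (fun n => dist_separable (P n)).
exists (fun k n => t n (nth 0%N (odflt [::] (unpickle k)) n)) => x e e0.
have e20 : 0 < e / 2 by lra.
have [N Ne] := inv_succ_lt e20.
have [K xK] := boolp.choice (fun n => td n (x n) _ e20).
exists (pickle (mkseq K N)); rewrite pickleK /=.
apply: le_lt_trans (dist_pi_le_prefix Ne _) _; last by lra.
by move=> n nN; rewrite nth_mkseq.
Qed.

Definition piPM : polishMetric :=
  PolishMetric dist_pi_metric (fun n => pm_point (P n))
    dist_pi_complete dist_pi_separable.

Lemma dcontinuous_coord n : dcontinuous (fun p : piPM => p n).
Proof.
move=> p e e0; exists (Num.min e 1 * inv_succ n); first exact: coord_weight_gt0.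
by move=> q; exact: dist_pi_coord_lt.
Qed.

End CountableProduct.

Section ClosedSubspace.
Variables (P : polishMetric) (C : set P) (c0 : P).
Hypotheses (Cc0 : C c0) (C_closed : dclosed C).

Definition dist_sub (a b : {x | C x}) : Real := dist (sval a) (sval b).

Lemma dist_sub_metric : is_metric dist_sub.
Proof.
rewrite /dist_sub; split => [a b|[a Ca] [b Cb]|a b|a b c] /=.
- exact: dist_ge0.
- split=> [/dist_eq0 ab|[->]]; last exact: distxx.
  by move: Ca Cb; rewrite ab => Ca Cb; congr exist; exact: Prop_irrelevance.
- exact: distC.
- exact: dist_triangle.
Qed.

Lemma dist_sub_complete u : dcauchy dist_sub u -> exists l, dconverges dist_sub u l.
Proof.
move=> uc; have [l ul] := dist_complete (uc : dcauchy dist (sval \o u)).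
suff Cl : C l by exists (exist _ l Cl).
apply: contrapT => /C_closed [r r0 rC]; have [N uN] := ul r r0.
by apply: (rC (sval (u N))); [rewrite distC; exact: uN | exact: svalP].
Qed.

Lemma dist_sub_separable : exists t : nat -> {x | C x},
  forall x (e : Real), 0 < e -> exists j, dist_sub x (t j) < e.
Proof.
have [s sd] := dist_separable P.
have /boolp.choice [c cP] : forall km : nat * nat, exists c : {x | C x},
    (exists2 y, C y & dist (s km.1) y < inv_succ km.2) ->
    dist (s km.1) (sval c) < inv_succ km.2.
  move=> [k m]; have [[y Cy ky]|nomeet] := pselect (exists2 y, C y & dist (s k) y < inv_succ m).
    by exists (exist _ y Cy).
  by exists (exist _ c0 Cc0) => /nomeet.
exists (fun j => c (odflt (0, 0)%N (unpickle j))) => -[x Cx] e e0.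
have e20 : 0 < e / 2 by lra.
have [m me] := inv_succ_lt e20; have [k xk] := sd x _ (inv_succ_gt0 m).
have kx : dist (s k) x < inv_succ m by rewrite distC.
have /= kc := cP (k, m) (ex_intro2 _ _ x Cx kx).
exists (pickle (k, m)); rewrite pickleK /dist_sub /=.
by have := dist_triangle (s k) x (sval (c (k, m))); lra.
Qed.

Definition subPM : polishMetric :=
  PolishMetric dist_sub_metric (exist _ c0 Cc0) dist_sub_complete dist_sub_separable.

Lemma dcontinuous_sval : dcontinuous (sval : subPM -> P).
Proof. by move=> x e e0; exists e. Qed.

End ClosedSubspace.
Arguments subPM {P C c0}.
Arguments dcontinuous_sval {P C c0 Cc0 C_closed}.

(** * The metric topology *)

Definition pm_top (P : polishMetric) : Type := P.
HB.instance Definition _ (P : polishMetric) := gen_eqMixin (pm_top P).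
HB.instance Definition _ (P : polishMetric) := gen_choiceMixin (pm_top P).
HB.instance Definition _ (P : polishMetric) :=
  @isMetric.Build Real (pm_top P) dist (@distxx P) (fun x y => (dist_eq0 x y).1)
    (@distC P) (@dist_triangle P).

Lemma nbhs_pm_topE (P : polishMetric) (x : pm_top P) (A : set (pm_top P)) :
  nbhs x A <-> exists2 e : Real, 0 < e & forall y, dist x y < e -> A y.
Proof. by rewrite nbhs_ballP; split=> -[e e0 eA]; exists e. Qed.

Lemma open_pm_topE (P : polishMetric) (A : set (pm_top P)) : open A <-> dopen A.
Proof.
rewrite openE; split=> Ao x /Ao; first by move=> /nbhs_pm_topE.
by move=> xA; apply/nbhs_pm_topE.
Qed.

Lemma dcontinuous_continuous {P Q : polishMetric} {f : P -> Q} :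
  dcontinuous f -> continuous (f : pm_top P -> pm_top Q).
Proof.
move=> fc x A /nbhs_pm_topE [e e0 eA]; apply/nbhs_pm_topE.
by have [d d0 fd] := fc x e e0; exists d => // y /fd /eA.
Qed.

Lemma continuous_dcomp {P Q : polishMetric} {T : topologicalType} {f : P -> Q}
    {g : pm_top Q -> T} :
  dcontinuous f -> continuous g -> continuous (fun x : pm_top P => g (f x)).
Proof. by move=> fc gc x; apply: continuous_comp (gc _); exact: dcontinuous_continuous. Qed.

Lemma pm_top_polish (P : polishMetric) : polish (pm_top P).
Proof.
have [s sd] := dist_separable P; split.
  exists (range s); split; first exact: card_image_le.
  move=> O [x Ox] /open_pm_topE Oo; have [e e0 eO] := Oo x Ox.
  by have [k xk] := sd x e e0; exists (s k); split; [exact: eO | exists k].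
exists dist; split; first exact: dist_is_metric.
  by move=> A; rewrite open_pm_topE.
move=> u /dist_complete [l ul]; exists l => O /nbhs_pm_topE [e e0 eO].
by have [N uN] := ul e e0; exists N => // n /= /uN; rewrite distC => /eO.
Qed.

Definition polish_image (T : topologicalType) :=
  exists (P : polishMetric) (p : pm_top P -> T),
    continuous p /\ forall x, exists u, p u = x.

Lemma countable_sub_range {T : Type} (x0 : T) {D : set T} :
  countable D -> exists s : nat -> T, D `<=` range s.
Proof.
move=> /countable_injP [f f_inj]; exists ('pinv_(fun=> x0) D f) => y Dy.
by exists (f y) => //; apply: pinvKV; rewrite ?inE.
Qed.

Section InducedMetric.
Context {T : topologicalType} {d : T -> T -> Real}.
Hypotheses (d_metric : is_metric d) (d_open : metric_induces d).

Lemma metric_ball_open x (e : Real) : open [set y | d x y < e].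
Proof.
have [_ _ _ d_triangle] := d_metric.
apply/d_open => y /= xy; exists (e - d x y); first lra.
by move=> z /= yz; have := d_triangle x y z; lra.
Qed.

Lemma metric_ball_center x (e : Real) : 0 < e -> d x x < e.
Proof. by have [_ d_eq0 _ _] := d_metric; rewrite (d_eq0 x x).2. Qed.

Lemma metric_nbhsE x (A : set T) :
  nbhs x A <-> exists2 e : Real, 0 < e & forall y, d x y < e -> A y.
Proof.
split=> [|[e e0 eA]]; last first.
  apply: filterS eA _; apply: open_nbhs_nbhs.
  by split; [exact: metric_ball_open | exact: metric_ball_center].
rewrite nbhsE => -[B [/d_open Bo Bx] BA].
by have [e e0 eB] := Bo x Bx; exists e => // y /eB /BA.
Qed.

End InducedMetric.

Lemma polish_image_polish {T : topologicalType} (x0 : T) : polish T -> polish_image T.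
Proof.
move=> [[D [D_countable D_dense]] [d [d_metric d_open d_complete]]].
have d_complete' u : dcauchy d u -> exists l, dconverges d u l.
  move=> /d_complete [l ul]; exists l => e e0.
  have /ul [N _ uN] : nbhs l [set y | d l y < e].
    by apply/(metric_nbhsE d_metric d_open); exists e.
  by exists N => n /uN; have [_ _ -> _] := d_metric.
have d_separable : exists s : nat -> T,
    forall x (e : Real), 0 < e -> exists k, d x (s k) < e.
  have [s Ds] := countable_sub_range x0 D_countable; exists s => x e e0.
  have [y [xy Dy]] := D_dense [set y | d x y < e]
    (ex_intro _ x (metric_ball_center d_metric x e e0)) (metric_ball_open d_metric d_open x e).
  by have [k _ sk] := Ds y Dy; exists k; rewrite sk.
exists (PolishMetric d_metric x0 d_complete' d_separable), id; split => [x A|x].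
  by move=> /(metric_nbhsE d_metric d_open) [e e0 eA]; apply/nbhs_pm_topE; exists e.
by exists x.
Qed.

Lemma polish_image_souslin {T : topologicalType} (x0 : T) : souslin T -> polish_image T.
Proof.
move=> [_ [T0|[P [p [P_polish p_cont p_surj]]]]].
  by have : [set: T] x0 by []; rewrite T0.
have [u0 _ _] : range p x0 by rewrite p_surj.
have [Q [q [q_cont q_surj]]] := polish_image_polish u0 P_polish.
exists Q, (p \o q); split => [x|x].
  exact: continuous_comp (q_cont x) (p_cont (q x)).
have [u _ <-] : range p x by rewrite p_surj.
by have [v <-] := q_surj u; exists v.
Qed.

(** * Analytic subsets of Polish metric spaces *)

Record presentation (X : polishMetric) (A : set X) := Presentation {
  pres_space : polishMetric;
  pres_dom : set pres_space;
  pres_map : pres_space -> X;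
  pres_dom_closed : dclosed pres_dom;
  pres_map_cont : dcontinuous pres_map;
  pres_image : pres_map @` pres_dom = A }.
Arguments presentation {X} A.
Arguments pres_space {X A}.
Arguments pres_dom {X A}.
Arguments pres_map {X A}.
Arguments pres_dom_closed {X A}.
Arguments pres_map_cont {X A}.
Arguments pres_image {X A}.

Lemma pres_imageP {X : polishMetric} {A : set X} (p : presentation A) x :
  A x <-> exists2 c, pres_dom p c & pres_map p c = x.
Proof. by case: p => S D f _ _ img /=; rewrite -img. Qed.

Definition danalytic {X : polishMetric} (A : set X) : Prop := inhabited (presentation A).

Lemma presentation_family (X : polishMetric) (A : nat -> set X) :
  (forall n, danalytic (A n)) -> inhabited (forall n, presentation (A n)).
Proof.
move=> An; have /choice_dep [p _] : forall n, exists p : presentation (A n), True.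
  by move=> n; case: (An n) => p; exists p.
exact: inhabits p.
Qed.

Lemma dclosed_danalytic (X : polishMetric) (C : set X) : dclosed C -> danalytic C.
Proof. by move=> Cc; constructor; exists X C id; [|exact: dcontinuous_id|exact: image_id]. Qed.

Lemma danalytic0 (X : polishMetric) : danalytic (@set0 X).
Proof. exact/dclosed_danalytic/dclosed0. Qed.

Lemma danalyticT (X : polishMetric) : danalytic (@setT X).
Proof. exact/dclosed_danalytic/dclosedT. Qed.

Lemma near_same_tag {P : nat -> polishMetric} (x : prodPM natPM (piPM P)) {e : Real} :
  0 < e -> exists2 d : Real, 0 < d & forall y,
    dist x y < d -> y.1 = x.1 /\ dist (x.2 x.1) (y.2 x.1) < e.
Proof.
move=> e0; exists (Num.min 1 (Num.min e 1 * inv_succ x.1)).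
  by rewrite lt_min ltr01 coord_weight_gt0.
move=> y; rewrite lt_min => /andP[d1 dk]; split.
  by apply/esym/natPM_dist_lt1; exact: le_lt_trans (dist_fst_le x y) d1.
by apply: dist_pi_coord_lt e0 _; exact: le_lt_trans (dist_snd_le x y) dk.
Qed.

(* A point of [\bigcup_n A n] is presented by the index [n] together with a
   point of the countable product of the presenting spaces. *)
Lemma danalytic_bigcup (X : polishMetric) (A : nat -> set X) :
  (forall n, danalytic (A n)) -> danalytic (\bigcup_n A n).
Proof.
move=> /presentation_family [p].
pose Y := prodPM natPM (piPM (fun n => pres_space (p n))).
constructor; exists Y [set y : Y | pres_dom (p y.1) (y.2 y.1)]
  (fun y : Y => pres_map (p y.1) (y.2 y.1)).
- move=> [k q] /= /(pres_dom_closed (p k)) [e e0 eD].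
  by have [d d0 dk] := near_same_tag (k, q) e0; exists d => // -[k' q'] /dk [/= -> /eD].
- move=> [k q] e e0 /=; have [r r0 rk] := pres_map_cont (p k) (q k) e e0.
  by have [d d0 dk] := near_same_tag (k, q) r0; exists d => // -[k' q'] /dk [/= -> /rk].
- apply/seteqP; split => [_ [[k q] Dq <-]|x [k _]] /=.
    by exists k => //; apply/(pres_imageP (p k)); exists (q k).
  move=> /(pres_imageP (p k)) [c Dc <-].
  exists ((k : natPM), dfwith (fun n => pm_point (pres_space (p n))) k c) => /=;
    by rewrite dfwithin.
Qed.

(* A point of [\bigcap_n A n] is presented by a sequence of points of the
   presenting spaces, all mapped to the same point. *)
Lemma danalytic_bigcap (X : polishMetric) (A : nat -> set X) :
  (forall n, danalytic (A n)) -> danalytic (\bigcap_n A n).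
Proof.
move=> /presentation_family [p].
pose Y := piPM (fun n => pres_space (p n)).
have map_cont n : dcontinuous (fun q : Y => pres_map (p n) (q n)).
  exact: dcontinuous_comp (dcontinuous_coord _ n) (pres_map_cont (p n)).
constructor; exists Y (\bigcap_n [set q : Y | pres_dom (p n) (q n) /\
    pres_map (p n) (q n) = pres_map (p 0%N) (q 0%N)])
  (fun q : Y => pres_map (p 0%N) (q 0%N)).
- apply: dclosed_bigcap => n; apply: dclosedI; last exact: dclosed_eq.
  exact: dclosed_preimage (dcontinuous_coord _ n) (pres_dom_closed (p n)).
- exact: map_cont.
- apply/seteqP; split => [_ [q Dq <-] n _|x Ax].
    by have [Dqn <-] := Dq n I; apply/(pres_imageP (p n)); exists (q n).
  have /choice_dep [q Dq] : forall n, exists c, pres_dom (p n) c /\ pres_map (p n) c = x.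
    by move=> n; have /(pres_imageP (p n)) [c] := Ax n I; exists c.
  exists q => [n _|]; last exact: (Dq 0%N).2.
  by have [Dqn qn] := Dq n; split; rewrite //= qn (Dq 0%N).2.
Qed.

Lemma dopen_danalytic (X : polishMetric) (U : set X) : dopen U -> danalytic U.
Proof.
move=> Uo.
have -> : U = \bigcup_n [set x | forall y, ~ U y -> inv_succ n <= dist x y].
  apply/seteqP; split => [x Ux|x [n _ Kx]].
    have [e e0 eU] := Uo x Ux; have [n ne] := inv_succ_lt e0.
    exists n => // y nUy; rewrite leNgt; apply/negP => xy.
    exact/nUy/eU/(lt_trans xy ne).
  by apply: contrapT => /Kx; rewrite distxx leNgt inv_succ_gt0.
apply: danalytic_bigcup => n; apply: dclosed_danalytic.
move=> x /existsNP [y /not_implyP [nUy /negP]]; rewrite -ltNge => xy.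
exists (inv_succ n - dist x y); first by rewrite subr_gt0.
by move=> z xz /(_ y nUy); have := dist_triangle x z y; rewrite (distC z x); lra.
Qed.

Lemma borel_danalytic {X : polishMetric} {A : set (pm_top X)} :
  borel A -> danalytic (A : set X).
Proof.
move=> Ab; suff : danalytic (A : set X) /\ danalytic (~` A : set X) by case.
pose G := [set B : set (pm_top X) | danalytic (B : set X) /\ danalytic (~` B : set X)].
apply: (smallest_sub (X := G)) Ab; last first.
  move=> U /open_pm_topE Uo; split; first exact: dopen_danalytic.
  by apply: dclosed_danalytic; rewrite /dclosed setCK.
split; rewrite /G.
- by rewrite /= setC0; split; [exact: danalytic0 | exact: danalyticT].
- by move=> B [B1 B2]; rewrite /= setTD setCK.
- move=> B BA; split; first by apply: danalytic_bigcup => n; case: (BA n).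
  by rewrite setC_bigcup; apply: danalytic_bigcap => n; case: (BA n).
Qed.

Lemma analytic_image {X : polishMetric} {Z : set X} {T : topologicalType}
    {h : pm_top X -> T} :
  danalytic Z -> continuous h -> analytic (h @` Z).
Proof.
move=> [p] h_cont; case: (pselect (pres_dom p !=set0)) => [[c0 Dc0]|D0]; last first.
  left; apply/seteqP; split => // y [x /(pres_imageP p) [c Dc cx] xy].
  by apply: D0; exists c.
right; pose S := subPM Dc0 (pres_dom_closed p).
exists (pm_top S), (fun u : pm_top S => h (pres_map p (sval u))); split.
- exact: pm_top_polish.
- exact: continuous_dcomp (dcontinuous_comp dcontinuous_sval (pres_map_cont p)) h_cont.
- apply/seteqP; split => [_ [u _ <-]|_ [x /(pres_imageP p) [c Dc <-] <-]].
    exists (pres_map p (sval u)) => //.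
    by apply/(pres_imageP p); exists (sval u) => //; exact: svalP.
  by exists (exist _ c Dc : S).
Qed.

Lemma analytic_set1 (T : topologicalType) (x : T) : analytic [set x].
Proof.
have -> : [set x] = (fun _ : pm_top natPM => x) @` setT.
  by apply/seteqP; split => [_ ->|_ [_ _ <-]] //; exists 0%N.
by apply: (analytic_image (danalyticT natPM)); exact: cst_continuous.
Qed.

(** * Borel sets and countable separation *)

Lemma borelC (T : topologicalType) (A : set T) : borel A -> borel (~` A).
Proof. by move=> Ab; rewrite -setTD; exact: sigma_algebraCD. Qed.

Lemma borelI (T : topologicalType) (A B : set T) : borel A -> borel B -> borel (A `&` B).
Proof.
move=> Ab Bb; rewrite -[A `&` B]setCK setCI -bigcup2E; apply: borelC.
apply: sigma_algebra_bigcup => -[|[|n]] /=; [exact: borelC | exact: borelC |].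
exact: sigma_algebra0.
Qed.

Lemma borel_measurable_continuous {S T : topologicalType} {f : S -> T} :
  continuous f -> borel_measurable f.
Proof.
move=> f_cont B Bb; apply: (smallest_sub (X := [set B | borel (f @^-1` B)])) Bb; last first.
  by move=> O Oo; apply: sub_sigma_algebra; exact: (continuousP f).1 f_cont O Oo.
split.
- by rewrite /= preimage_set0; exact: sigma_algebra0.
- by move=> A Ab; rewrite /= setTD preimage_setC; exact: borelC.
- by move=> A Ab; rewrite /= preimage_bigcup; exact: sigma_algebra_bigcup.
Qed.

Lemma borel_measurable_comp {S T U : topologicalType} {f : S -> T} {g : T -> U} :
  borel_measurable f -> borel_measurable g -> borel_measurable (g \o f).
Proof. by move=> fm gm B /gm /fm. Qed.

Lemma borel_order_preimage {S T : topologicalType} {le : T -> T -> Prop} {f g : S -> T} :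
  borel_order le -> continuous f -> continuous g -> borel [set s | le (f s) (g s)].
Proof.
move=> le_borel fc gc.
apply: (borel_measurable_continuous (f := fun s => (f s, g s))) le_borel.
by move=> s; exact: cvg_pair (fc s) (gc s).
Qed.

Definition open_separation {T : topologicalType} (A B : set T) :=
  [/\ open A, open B & A `&` B = set0].

Definition countably_separated (T : topologicalType) :=
  exists O O' : nat -> set T, (forall n, open_separation (O n) (O' n)) /\
    forall x y, x <> y -> exists n, O n x /\ O' n y.

Lemma borel_eq {S T : topologicalType} {a b : S -> T} :
  countably_separated T -> borel_measurable a -> borel_measurable b ->
  borel [set s | a s = b s].
Proof.
move=> [O [O' [OO' sepO]]] am bm.
have -> : [set s | a s = b s] = ~` \bigcup_n (a @^-1` O n `&` b @^-1` O' n).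
  apply/seteqP; split => [s abs [n _ [aO bO']]|s nU].
    have [_ _ OO'0] := OO' n; have : (O n `&` O' n) (a s) by split; rewrite // abs.
    by rewrite OO'0.
  by apply: contrapT => /sepO [n [aO bO']]; apply: nU; exists n.
apply: borelC; apply: sigma_algebra_bigcup => n; have [Oo O'o _] := OO' n.
by apply: borelI; [apply: am | apply: bm]; exact: sub_sigma_algebra.
Qed.

Lemma open_separation_choice {I : Type} {T : topologicalType} (U V : I -> set T) :
  exists O O' : I -> set T, forall i, open_separation (O i) (O' i) /\
    ((exists A B, [/\ open_separation A B, U i `<=` A & V i `<=` B]) ->
      U i `<=` O i /\ V i `<=` O' i).
Proof.
have /boolp.choice [OO' OO'P] : forall i, exists AB : set T * set T,
    open_separation AB.1 AB.2 /\
    ((exists A B, [/\ open_separation A B, U i `<=` A & V i `<=` B]) ->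
      U i `<=` AB.1 /\ V i `<=` AB.2).
  move=> i; have [[A [B [AB UA VB]]]|none] := pselect (exists A B,
    [/\ open_separation A B, U i `<=` A & V i `<=` B]).
    by exists (A, B).
  by exists (set0, set0); split => //; split; rewrite ?set0I //; exact: open0.
by exists (fst \o OO'), (snd \o OO').
Qed.

Lemma dense_ball_sub_preimage {P : polishMetric} {s : nat -> P} {T : topologicalType}
    {p : pm_top P -> T} {u : P} {A : set T} :
  (forall x (e : Real), 0 < e -> exists k, dist x (s k) < e) -> continuous p ->
  nbhs (p u) A -> exists k m, dist (s k) u < inv_succ m /\
    forall z, dist (s k) z < inv_succ m -> A (p z).
Proof.
move=> s_dense p_cont /p_cont /nbhs_pm_topE [e e0 eA].
have [m me] := inv_succ_lt (divr_gt0 e0 (ltr0Sn _ 1)).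
have [k uk] := s_dense u _ (inv_succ_gt0 m).
exists k, m; split; first by rewrite distC.
by move=> z kz; apply: eA; have := dist_triangle (s k) u z; lra.
Qed.

(* For each pair of balls of radii [inv_succ _] around dense points, choose
   disjoint open sets containing their images when there are some; Hausdorffness
   and the continuity of [p] provide such a pair of balls for any [x <> y]. *)
Lemma polish_image_countably_separated {T : topologicalType} :
  hausdorff_space T -> polish_image T -> countably_separated T.
Proof.
rewrite open_hausdorff => T_sep [P [p [p_cont p_surj]]].
have [s s_dense] := dist_separable P.
pose ball km := p @` [set z | dist (s km.1) z < inv_succ km.2].
pose code n := odflt ((0, 0), (0, 0))%N (unpickle n).
have [O [O' OO']] := open_separation_choice (ball \o fst \o code) (ball \o snd \o code).
exists O, O'; split => [n|x y /eqP xy]; first by case: (OO' n).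
have [[A B] /= [/set_mem xA /set_mem yB] [Ao Bo /eqP AB0]] := T_sep x y xy.
have [u pu] := p_surj x; have [v pv] := p_surj y.
have /(dense_ball_sub_preimage s_dense p_cont) [k [m [uk kA]]] : nbhs (p u) A.
  by apply: open_nbhs_nbhs; split; rewrite // pu.
have /(dense_ball_sub_preimage s_dense p_cont) [k' [m' [vk k'B]]] : nbhs (p v) B.
  by apply: open_nbhs_nbhs; split; rewrite // pv.
exists (pickle ((k, m), (k', m'))); have [_] := OO' (pickle ((k, m), (k', m'))).
rewrite /= /code pickleK /= => /(_ _) [|OA O'B].
  by exists A, B; split => // _ [z /= ? <-]; [exact: kA | exact: k'B].
by split; [apply: OA; exists u | apply: O'B; exists v].
Qed.

(** * The feasible set of a constant random variable *)

Section Lift.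
Context {Omega F R : topologicalType} (leF : F -> F -> Prop) (leR : R -> R -> Prop).
Context (a : Omega -> F) (b : Omega -> R) {PO PF PR : polishMetric}.
Context {pO : pm_top PO -> Omega} {pF : pm_top PF -> F} {pR : pm_top PR -> R}.
Hypotheses (pO_cont : continuous pO) (pF_cont : continuous pF) (pR_cont : continuous pR).

Let Y := prodPM PO (prodPM (prodPM PF PF) (prodPM PR PR)).

(* A point [(w, (u, u'), (v, v'))] of [Y] codes the feasible point
   [(pO w, pF u, pR v)], with [pF u'] and [pR v'] witnessing [a (pO w)] and
   [b (pO w)]. *)
Definition lift_set : set Y :=
  [set y | [/\ a (pO y.1) = pF y.2.1.2, leF (pF y.2.1.1) (pF y.2.1.2),
               b (pO y.1) = pR y.2.2.2 & leR (pR y.2.2.2) (pR y.2.2.1)]].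

Definition lift_map (y : pm_top Y) : Omega * F * R :=
  (pO y.1, pF y.2.1.1, pR y.2.2.1).

Let dcont_F : dcontinuous (fun y : Y => y.2.1).
Proof. exact: dcontinuous_comp dcontinuous_snd dcontinuous_fst. Qed.

Let dcont_R : dcontinuous (fun y : Y => y.2.2).
Proof. exact: dcontinuous_comp dcontinuous_snd dcontinuous_snd. Qed.

Let cont_w : continuous (fun y : pm_top Y => pO y.1).
Proof. exact: continuous_dcomp dcontinuous_fst pO_cont. Qed.

Let cont_u : continuous (fun y : pm_top Y => pF y.2.1.1).
Proof. exact: continuous_dcomp (dcontinuous_comp dcont_F dcontinuous_fst) pF_cont. Qed.

Let cont_u' : continuous (fun y : pm_top Y => pF y.2.1.2).
Proof. exact: continuous_dcomp (dcontinuous_comp dcont_F dcontinuous_snd) pF_cont. Qed.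

Let cont_v : continuous (fun y : pm_top Y => pR y.2.2.1).
Proof. exact: continuous_dcomp (dcontinuous_comp dcont_R dcontinuous_fst) pR_cont. Qed.

Let cont_v' : continuous (fun y : pm_top Y => pR y.2.2.2).
Proof. exact: continuous_dcomp (dcontinuous_comp dcont_R dcontinuous_snd) pR_cont. Qed.

Lemma lift_map_continuous : continuous lift_map.
Proof.
by move=> y; exact: (cvg_pair (cvg_pair (cont_w y) (cont_u y)) (cont_v y)).
Qed.

Lemma lift_set_borel : countably_separated F -> countably_separated R ->
  borel_order leF -> borel_order leR -> borel_measurable a -> borel_measurable b ->
  borel (lift_set : set (pm_top Y)).
Proof.
move=> sepF sepR leFb leRb am bm.
have aw := borel_measurable_comp (borel_measurable_continuous cont_w) am.
have bw := borel_measurable_comp (borel_measurable_continuous cont_w) bm.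
have -> : lift_set = [set y : pm_top Y | a (pO y.1) = pF y.2.1.2] `&`
    ([set y | leF (pF y.2.1.1) (pF y.2.1.2)] `&`
    ([set y | b (pO y.1) = pR y.2.2.2] `&` [set y | leR (pR y.2.2.2) (pR y.2.2.1)])).
  by apply/seteqP; split => [y [? ? ? ?]|y [? [? [? ?]]]].
apply: borelI; first exact: borel_eq sepF aw (borel_measurable_continuous cont_u').
apply: borelI; first exact: borel_order_preimage leFb cont_u cont_u'.
apply: borelI; first exact: borel_eq sepR bw (borel_measurable_continuous cont_v').
exact: borel_order_preimage leRb cont_v' cont_v.
Qed.

Hypotheses (pO_surj : forall w, exists x, pO x = w)
  (pF_surj : forall y, exists u, pF u = y) (pR_surj : forall y, exists v, pR v = y).

Lemma lift_map_image :
  lift_map @` lift_set = [set z | leF z.1.2 (a z.1.1) /\ leR (b z.1.1) z.2].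
Proof.
apply/seteqP; split => [_ [y [ay uu' bv v'v] <-]|[[w y1] y2] /=].
  by rewrite /= ay bv.
have [x <-] := pO_surj w; have [u <-] := pF_surj y1; have [v <-] := pR_surj y2.
have [u' u'a] := pF_surj (a (pO x)); have [v' v'b] := pR_surj (b (pO x)).
by move=> [uA Bv]; exists (x, ((u, u'), (v, v'))) => //; rewrite /lift_set /= u'a v'b.
Qed.

End Lift.

Lemma feasible_const_DP_analytic (Omega F R : topologicalType)
    (leF : F -> F -> Prop) (leR : R -> R -> Prop) (alpha : Omega -> F * R) :
  polish Omega -> souslin F -> souslin R -> borel_order leF -> borel_order leR ->
  rv_FR alpha -> analytic (feasible (const_DP leF leR \o alpha)).
Proof.
move=> Om_polish F_souslin R_souslin leFb leRb [am bm].
set S := feasible _; have [[[[w y1] y2] _]|S0] := pselect (S !=set0); last first.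
  by left; apply/seteqP; split => // z Sz; apply: S0; exists z.
have [PO [pO [pO_cont pO_surj]]] := polish_image_polish w Om_polish.
have [PF [pF [pF_cont pF_surj]]] := polish_image_souslin y1 F_souslin.
have [PR [pR [pR_cont pR_surj]]] := polish_image_souslin y2 R_souslin.
have sepF := polish_image_countably_separated F_souslin.1
  (polish_image_souslin y1 F_souslin).
have sepR := polish_image_countably_separated R_souslin.1
  (polish_image_souslin y2 R_souslin).
have Z_borel := lift_set_borel leF leR _ _ pO_cont pF_cont pR_cont sepF sepR leFb leRb am bm.
have := analytic_image (borel_danalytic Z_borel) (lift_map_continuous pO_cont pF_cont pR_cont).
by rewrite (lift_map_image _ _ _ _ pO_surj pF_surj pR_surj).
Qed.

Lemma const_DP_in_DP (F R : topologicalType) (leF : F -> F -> Prop) (leR : R -> R -> Prop)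
    (x : F * R) : in_DP leF leR (const_DP leF leR x).
Proof.
exists [set x]; split; first exact: analytic_set1.
by apply/seteqP; split => [y xy|y [_ -> //]]; exists x.
Qed.

Theorem theorem6 (Omega F R : topologicalType)
    (leF : F -> F -> Prop) (leR : R -> R -> Prop) :
  polish Omega ->
  souslin F -> souslin R ->
  partial_order leF -> partial_order leR ->
  borel_order leF -> borel_order leR ->
  (forall x : F * R, in_DP leF leR (const_DP leF leR x)) /\
  quasi_measurable_to_DP Omega leF leR (const_DP leF leR).
Proof.
move=> Om_polish F_souslin R_souslin _ _ leFb leRb.
split=> [x|alpha alpha_rv]; first exact: const_DP_in_DP.
split=> [w|]; first exact: const_DP_in_DP.
exact: feasible_const_DP_analytic.
Qed.
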